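(* Let $\beta=(\beta_{ij})_{i,j\ge 0,\ i+j\le 6}$ be a real sequence such that $\mathcal M(3)(\beta)$ is positive semidefinite, $\mathcal M(2)(\beta)$ is positive definite, and $\operatorname{rank}\mathcal M(3)=\operatorname{card}\mathcal V=8$, where $\mathcal V=\{(x_1,y_1),\dots,(x_8,y_8)\}$ is the algebraic variety of $\mathcal M(3)$. Suppose the columns $\mathfrak B_1=\{1,X,Y,X^2,XY,Y^2,X^3,X^2Y\}$ form a basis of the column space of $\mathcal M(3)$. Then $\beta$ has a representing measure if and only if $\mathcal M(3)$ is weakly consistent and, for all $i,j\ge 0$ with $0\le i+j\le 2$, $$\Lambda_\beta\big(x^iy^j(x^4-a_0-a_1x-a_2y-a_3x^2-a_4xy-a_5y^2-a_6x^3-a_7x^2y)\big)=0$$ and $$\Lambda_\beta\big(x^iy^j(x^3y-b_0-b_1x-b_2y-b_3x^2-b_4xy-b_5y^2-b_6x^3-b_7x^2y)\big)=0,$$ where $(a_0,\dots,a_7)^T=W_{\mathfrak B_1}^{-1}(x_1^4,\dots,x_8^4)^T$ and $(b_0,\dots,b_7)^T=W_{\mathfrak B_1}^{-1}(x_1^3y_1,\dots,x_8^3y_8)^T$.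
   Context: The moment matrix $\mathcal M(3)(\beta)$ has rows and columns indexed by $1,X,Y,X^2,XY,Y^2,X^3,X^2Y,XY^2,Y^3$ in this order, with entry $\beta_{i+k,j+l}$ in row $X^iY^j$ and column $X^kY^l$; $\mathcal M(2)(\beta)$ is its principal submatrix indexed by monomials of degree $\le 2$. For $p(x,y)=\sum a_{ij}x^iy^j$ of degree $\le 3$, $p(X,Y)=\sum a_{ij}X^iY^j$ is the corresponding linear combination of columns. The algebraic variety is $\mathcal V=\bigcap\{\mathcal Z(p):\deg p\le 3,\ p(X,Y)=\mathbf 0\}$ with $\mathcal Z(p)$ the real zero set of $p$. The Riesz functional $\Lambda_\beta$ on polynomials of degree $\le 6$ is $\Lambda_\beta(\sum a_{ij}x^iy^j)=\sum a_{ij}\beta_{ij}$. A representing measure is a positive Borel measure $\mu$ on $\mathbb R^2$ with $\beta_{ij}=\int x^iy^j\,d\mu$ for $i+j\le 6$. $\mathcal M(3)$ is weakly consistent if every polynomial $p$ of degree $\le 3$ vanishing on $\mathcal V$ satisfies $p(X,Y)=\mathbf 0$. The generalized Vandermonde matrix $W$ is the $8\times 10$ matrix whose $k$-th row is $(1,x_k,y_k,x_k^2,x_ky_k,y_k^2,x_k^3,x_k^2y_k,x_ky_k^2,y_k^3)$, with columns labeled $1,X,Y,\dots,Y^3$; for a set $\mathcal B$ of column labels, $W_{\mathcal B}$ is the square submatrix of $W$ formed by the columns in $\mathcal B$ (in the listed order). *)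

From HB Require Import structures.
From mathcomp Require Import all_boot all_order all_algebra.
From mathcomp Require Import all_classical all_reals all_analysis.
Set Implicit Arguments. Unset Strict Implicit. Unset Printing Implicit Defensive.
Import Order.TTheory GRing.Theory Num.Theory.
Local Open Scope ring_scope.

Section Defs.
Variable R : realType.

(* Monomials of degree <= 3 in the order 1,X,Y,X^2,XY,Y^2,X^3,X^2Y,XY^2,Y^3 ;
   (i,j) stands for X^i Y^j. *)
Definition monos : seq (nat * nat) :=
  [:: (0,0); (1,0); (0,1); (2,0); (1,1); (0,2); (3,0); (2,1); (1,2); (0,3)]%N.
Definition mono (k : 'I_10) : nat * nat := nth (0,0)%N monos k.

Definition M3 (beta : nat -> nat -> R) : 'M[R]_10 :=
  \matrix_(r < 10, c < 10)
    beta ((mono r).1 + (mono c).1)%N ((mono r).2 + (mono c).2)%N.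

(* M(2)(beta): principal submatrix indexed by monomials of degree <= 2. *)
Definition M2 (beta : nat -> nat -> R) : 'M[R]_6 :=
  mxsub (widen_ord (isT : (6 <= 10)%N)) (widen_ord (isT : (6 <= 10)%N)) (M3 beta).

Definition psd_mx n (A : 'M[R]_n) : Prop :=
  forall v : 'cV[R]_n, 0 <= (v^T *m A *m v) 0 0.
Definition pd_mx n (A : 'M[R]_n) : Prop :=
  forall v : 'cV[R]_n, v != 0 -> 0 < (v^T *m A *m v) 0 0.

(* Real bivariate polynomials: {poly {poly R}}, outer variable x, inner y. *)
Definition xx : {poly {poly R}} := 'X.
Definition yy : {poly {poly R}} := ('X)%:P.
Definition mon (i j : nat) : {poly {poly R}} := xx ^+ i * yy ^+ j.
Definition cst (c : R) : {poly {poly R}} := c%:P%:P.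
Definition coef2 (p : {poly {poly R}}) (i j : nat) : R := (p`_i)`_j.
Definition deg_le (p : {poly {poly R}}) (n : nat) : Prop :=
  forall i j, (n < i + j)%N -> coef2 p i j = 0.
Definition eval2 (p : {poly {poly R}}) (x y : R) : R := (p.[x%:P]).[y].

Definition Lambda (beta : nat -> nat -> R) (p : {poly {poly R}}) : R :=
  \sum_(i < size p) \sum_(j < size p`_i) coef2 p i j * beta i j.

(* p(X,Y): the corresponding linear combination of columns of M(3)
   (meaningful for deg p <= 3). *)
Definition polycol (beta : nat -> nat -> R) (p : {poly {poly R}}) : 'cV[R]_10 :=
  \sum_(k < 10) coef2 p (mono k).1 (mono k).2 *: col k (M3 beta).

Definition variety (beta : nat -> nat -> R) (x y : R) : Prop :=
  forall p, deg_le p 3 -> polycol beta p = 0 -> eval2 p x y = 0.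

Definition weakly_consistent (beta : nat -> nat -> R) : Prop :=
  forall p, deg_le p 3 -> (forall x y, variety beta x y -> eval2 p x y = 0) ->
    polycol beta p = 0.

Definition Wmx (pts : 'I_8 -> R * R) : 'M[R]_(8, 10) :=
  \matrix_(k < 8, c < 10) ((pts k).1 ^+ (mono c).1 * (pts k).2 ^+ (mono c).2).
Definition B1 : 'I_8 -> 'I_10 := widen_ord (isT : (8 <= 10)%N).
Definition WB1 (pts : 'I_8 -> R * R) : 'M[R]_8 := colsub B1 (Wmx pts).

Definition B1_basis (M : 'M[R]_10) : Prop :=
  row_free (colsub B1 M)^T /\ ((colsub B1 M)^T == M^T)%MS.

Definition reduced (c : 'cV[R]_8) (q : {poly {poly R}}) (i j : nat) :=
  mon i j * (q - \sum_(k < 8) cst (c k 0) * mon (mono (B1 k)).1 (mono (B1 k)).2).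

End Defs.

Local Open Scope classical_set_scope.
Local Open Scope ereal_scope.

Definition representing (R : realType)
  (mu : {measure set (R * R)%type -> \bar R}) (beta : nat -> nat -> R) : Prop :=
  forall i j : nat, (i + j <= 6)%N ->
    mu.-integrable setT (fun p : R * R => ((p.1 ^+ i * p.2 ^+ j)%R)%:E) /\
    \int[mu]_p ((p.1 ^+ i * p.2 ^+ j)%R)%:E = (beta i j)%:E.

(* Write V = {p_1, ..., p_8} and W = W_{B1}.  A kernel vector of W would be
   a polynomial in the span of B1 vanishing on V, hence (weak consistency) a
   column relation among the independent columns of B1: so W is invertible.
   Put rho = W^-T (beta_m)_{m in B1}, so that L = sum_k rho_k delta_{p_k}
   agrees with Lambda on B1.  Every monomial of degree <= 6 outside B1 is
   x^u y^v t with t in {x y^2, y^3, x^4, x^3 y}, and x^u y^v (t - t~), t~ the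
   B1-interpolant of t on V, is killed by Lambda: by weak consistency when
   deg t = 3, by the hypothesis when deg t = 4.  Inducting over the monomials
   gives Lambda = L in degree <= 6, and rho_k = Lambda(q_k^2) >= 0 for the
   Lagrange polynomial q_k of p_k in span B1, as M(3) >= 0.  Conversely, a
   kernel polynomial q of M(3) has int q^2 dmu = 0, so a representing measure
   lives on V and Lambda kills every polynomial of degree <= 6 vanishing on V;
   this gives weak consistency and the conditions on Lambda. *)

From Pilot Require Import Defs.
From HB Require Import structures.
From mathcomp Require Import all_boot all_order all_algebra.
From mathcomp Require Import all_classical all_reals all_analysis.
From mathcomp Require Import measurable_realfun zify ring.
Import Order.TTheory GRing.Theory Num.Theory.
Local Open Scope ring_scope.

Set Implicit Arguments. Unset Strict Implicit. Unset Printing Implicit Defensive.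

(* Plain [cst] would be the constant function of mathcomp-analysis. *)
Local Notation cst := Defs.cst.

Section Bivariate.
Variable R : realType.
Implicit Types (p q : {poly {poly R}}) (c x y : R).
Local Notation mon := (mon R).

Lemma poly2P p q : (forall i j, coef2 p i j = coef2 q i j) -> p = q.
Proof. by move=> pq; apply/polyP => i; apply/polyP => j; apply: pq. Qed.

Lemma coef2D p q i j : coef2 (p + q) i j = coef2 p i j + coef2 q i j.
Proof. by rewrite /coef2 !coefD. Qed.

Lemma coef2B p q i j : coef2 (p - q) i j = coef2 p i j - coef2 q i j.
Proof. by rewrite /coef2 !coefB. Qed.

Lemma coef2_sum I (r : seq I) (P : pred I) (F : I -> {poly {poly R}}) i j :
  coef2 (\sum_(k <- r | P k) F k) i j = \sum_(k <- r | P k) coef2 (F k) i j.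
Proof. by rewrite /coef2 !coef_sum. Qed.

Lemma coef2_cstM c p i j : coef2 (cst c * p) i j = c * coef2 p i j.
Proof. by rewrite /coef2 /cst !coefCM. Qed.

Lemma monE a b : mon a b = 'X^a * ('X^b)%:P.
Proof. by rewrite /mon /xx /yy rmorphXn. Qed.

Lemma monM a b a' b' : mon a b * mon a' b' = mon (a + a') (b + b').
Proof. by rewrite !monE mulrACA -exprD -rmorphM -exprD. Qed.

Lemma coef2_monM a b p i j : coef2 (mon a b * p) i j =
  if (a <= i)%N && (b <= j)%N then coef2 p (i - a) (j - b) else 0.
Proof.
rewrite /coef2 monE -mulrA coefXnM; case: (ltnP i a) => //= _.
  by rewrite coef0.
by rewrite coefCM coefXnM; case: ltnP.
Qed.

Lemma coef2_mon a b i j : coef2 (mon a b) i j = (i == a)%:R * (j == b)%:R.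
Proof.
rewrite -[mon a b]mulr1 coef2_monM /coef2 coef1.
case: (leqP a i) => [le_ai|lt_ia] /=; last by rewrite ltn_eqF ?mul0r.
case: (leqP b j) => [le_bj|lt_jb] /=; last by rewrite (ltn_eqF lt_jb) mulr0.
rewrite subn_eq0 eqn_leq le_ai andbT; case: (i <= a)%N; last by rewrite coef0 mul0r.
by rewrite mul1r coefC subn_eq0 eqn_leq le_bj andbT; case: (j <= b)%N.
Qed.

Lemma eval2B p q x y : eval2 (p - q) x y = eval2 p x y - eval2 q x y.
Proof. by rewrite /eval2 !hornerD !hornerN. Qed.

Lemma eval2M p q x y : eval2 (p * q) x y = eval2 p x y * eval2 q x y.
Proof. by rewrite /eval2 !hornerM. Qed.

Lemma eval2_cst c x y : eval2 (cst c) x y = c.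
Proof. by rewrite /eval2 /cst !hornerC. Qed.

Lemma eval2_mon a b x y : eval2 (mon a b) x y = x ^+ a * y ^+ b.
Proof. by rewrite /eval2 monE !hornerE. Qed.

Lemma eval2_sum I (r : seq I) (P : pred I) (F : I -> {poly {poly R}}) x y :
  eval2 (\sum_(k <- r | P k) F k) x y = \sum_(k <- r | P k) eval2 (F k) x y.
Proof. by rewrite /eval2 !horner_sum. Qed.

Lemma deg_leW p m n : (m <= n)%N -> deg_le p m -> deg_le p n.
Proof. by move=> le_mn pm i j lt_nij; apply: pm; apply: leq_ltn_trans lt_nij. Qed.

Lemma deg_leD p q n : deg_le p n -> deg_le q n -> deg_le (p + q) n.
Proof. by move=> pn qn i j lt_nij; rewrite coef2D pn ?qn ?addr0. Qed.

Lemma deg_leB p q n : deg_le p n -> deg_le q n -> deg_le (p - q) n.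
Proof. by move=> pn qn i j lt_nij; rewrite coef2B pn ?qn ?subr0. Qed.

Lemma deg_le_sum I (r : seq I) (P : pred I) (F : I -> {poly {poly R}}) n :
  (forall k, P k -> deg_le (F k) n) -> deg_le (\sum_(k <- r | P k) F k) n.
Proof.
move=> Fn; elim/big_ind: _ => //; first by move=> i j _; rewrite /coef2 !coef0.
by move=> p q; apply: deg_leD.
Qed.

Lemma deg_le_cstM c p n : deg_le p n -> deg_le (cst c * p) n.
Proof. by move=> pn i j lt_nij; rewrite coef2_cstM pn ?mulr0. Qed.

Lemma deg_le_monM a b p n : deg_le p n -> deg_le (mon a b * p) (a + b + n).
Proof.
move=> pn i j lt_ij; rewrite coef2_monM; case: ifP => // /andP[le_ai le_bj].
by apply: pn; lia.
Qed.

Lemma deg_le_mon a b : deg_le (mon a b) (a + b).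
Proof.
move=> i j lt_ij; rewrite coef2_mon.
have [ia|_] := eqVneq i a; last by rewrite mul0r.
have [jb|_] := eqVneq j b; last by rewrite mulr0.
by rewrite ia jb ltnn in lt_ij.
Qed.

End Bivariate.

Section MonomialBasis.
Variable R : realType.
Implicit Types (p q : {poly {poly R}}) (x y : R).
Local Notation mon := (mon R).

Definition monk (k : 'I_10) := mon (mono k).1 (mono k).2.

Lemma mono_deg k : ((mono k).1 + (mono k).2 <= 3)%N.
Proof. by case: k => [[|[|[|[|[|[|[|[|[|[|//]]]]]]]]]] ?]. Qed.

Lemma mono_inj : injective mono.
Proof.
move=> k k' kk'; apply/val_inj/eqP.
rewrite -(@nth_uniq _ (0, 0)%N monos) //; last exact: ltn_ord.
  by apply/eqP; exact: kk'.
exact: ltn_ord.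
Qed.

Lemma mono_surj u v : (u + v <= 3)%N -> exists k, mono k = (u, v).
Proof.
move=> le_uv3; have uv_monos : (u, v) \in monos.
  move: le_uv3; case: u => [|[|[|[|u]]]]; case: v => [|[|[|[|v]]]] //.
have lt_idx : (index (u, v) monos < 10)%N by rewrite -[10%N]/(size monos) index_mem.
by exists (Ordinal lt_idx); rewrite /mono nth_index.
Qed.

Lemma deg_le_monk k : deg_le (monk k) 3.
Proof. by apply: deg_leW (mono_deg k) _; apply: deg_le_mon. Qed.

Definition coefv p : 'cV[R]_10 := \col_k coef2 p (mono k).1 (mono k).2.
Definition polyv (c : 'cV[R]_10) := \sum_k cst (c k 0) * monk k.

Lemma deg_le_polyv c : deg_le (polyv c) 3.
Proof. by apply: deg_le_sum => k _; apply/deg_le_cstM/deg_le_monk. Qed.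

Lemma coef2_polyv c k : coef2 (polyv c) (mono k).1 (mono k).2 = c k 0.
Proof.
rewrite coef2_sum (bigD1 k) //= coef2_cstM coef2_mon !eqxx mulr1 mulr1.
rewrite big1 ?addr0 // => l lk; rewrite coef2_cstM coef2_mon.
have [e1|_] := eqVneq (mono k).1 (mono l).1; last by rewrite mul0r mulr0.
have [e2|_] := eqVneq (mono k).2 (mono l).2; last by rewrite !mulr0.
by move: lk; rewrite (mono_inj (injective_projections _ _ e1 e2)) eqxx.
Qed.

Lemma polyvK c : coefv (polyv c) = c.
Proof. by apply/matrixP => k j; rewrite ord1 mxE coef2_polyv. Qed.

Lemma coefvK p : deg_le p 3 -> polyv (coefv p) = p.
Proof.
move=> p3; apply: poly2P => u v; have [le_uv3|lt3_uv] := leqP (u + v) 3.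
  have [k kuv] := mono_surj le_uv3.
  by rewrite -[u]/((u, v).1) -[v]/((u, v).2) -kuv coef2_polyv mxE.
by rewrite deg_le_polyv // p3.
Qed.

Lemma eval2_polyv c x y :
  eval2 (polyv c) x y = \sum_k c k 0 * (x ^+ (mono k).1 * y ^+ (mono k).2).
Proof.
by rewrite eval2_sum; apply: eq_bigr => k _; rewrite eval2M eval2_cst eval2_mon.
Qed.

Lemma deg_le_mul33 p q : deg_le p 3 -> deg_le q 3 -> deg_le (p * q) 6.
Proof.
move=> p3 q3; rewrite -(coefvK p3) mulr_suml; apply: deg_le_sum => k _.
rewrite -mulrA; apply: deg_le_cstM.
apply: (deg_leW _ (deg_le_monM q3)).
by have := mono_deg k; lia.
Qed.

Lemma sum_ord_delta n u (F : nat -> R) :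
  \sum_(i < n) F i * (u == i :> nat)%:R = if (u < n)%N then F u else 0.
Proof.
case: ifP => [lt_un|ge_un].
  rewrite (bigD1 (Ordinal lt_un)) //= eqxx mulr1 big1 ?addr0 // => i iu.
  rewrite (_ : (u == i :> nat) = false) ?mulr0 //.
  by apply: contraNF iu => /eqP ui; apply/eqP/val_inj.
rewrite big1 // => i _; have [ui|_] := eqVneq u i; last by rewrite mulr0.
by rewrite ui ltn_ord in ge_un.
Qed.

Lemma deg_le6E p : deg_le p 6 ->
  p = \sum_(i < 7) \sum_(j < 7 | (i + j <= 6)%N) cst (coef2 p i j) * mon i j.
Proof.
move=> p6; apply: poly2P => u v; rewrite coef2_sum.
have termE (i j : nat) :
    (if (i + j <= 6)%N then coef2 (cst (coef2 p i j) * mon i j) u v else 0) =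
    (if (i + j <= 6)%N then coef2 p i j else 0) * (u == i)%:R * (v == j)%:R.
  by case: ifP; rewrite ?mul0r // coef2_cstM coef2_mon mulrA.
under eq_bigr => i _ do rewrite coef2_sum big_mkcond /=.
under eq_bigr => i _ do under eq_bigr => j _ do rewrite termE.
under eq_bigr => i _ do rewrite (sum_ord_delta 7 v
  (fun j => (if (i + j <= 6)%N then coef2 p i j else 0) * (u == i)%:R)).
have [lt_v7|le_7v] := ltnP v 7; last by rewrite big1 // p6 //; lia.
rewrite (sum_ord_delta 7 u (fun i => if (i + v <= 6)%N then coef2 p i v else 0)).
have [lt_u7|le_7u] := ltnP u 7; last by rewrite p6 //; lia.
by case: leqP => // lt6; rewrite p6.
Qed.

End MonomialBasis.

Section Riesz.
Variables (R : realType) (beta : nat -> nat -> R).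
Implicit Types (p q : {poly {poly R}}) (c : R).
Local Notation mon := (mon R).

(* [Lambda] with its range of summation fixed to the box [0, 6]^2, which makes
   it additive. *)
Definition riesz p : R := \sum_(i < 7) \sum_(j < 7) coef2 p i j * beta i j.

Fact riesz_is_zmod_morphism : zmod_morphism riesz.
Proof.
move=> p q; rewrite /riesz -sumrB; apply: eq_bigr => i _; rewrite -sumrB.
by apply: eq_bigr => j _; rewrite coef2B mulrBl.
Qed.

HB.instance Definition _ :=
  GRing.isZmodMorphism.Build _ _ riesz riesz_is_zmod_morphism.

Lemma riesz_cstM c p : riesz (cst c * p) = c * riesz p.
Proof.
rewrite /riesz mulr_sumr; apply: eq_bigr => i _; rewrite mulr_sumr.
by apply: eq_bigr => j _; rewrite coef2_cstM mulrA.
Qed.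

Lemma riesz_mon a b : (a < 7)%N -> (b < 7)%N -> riesz (mon a b) = beta a b.
Proof.
move=> lt_a7 lt_b7; rewrite /riesz.
have termE (i j : nat) :
    coef2 (mon a b) i j * beta i j = beta i j * (a == i)%:R * (b == j)%:R.
  by rewrite coef2_mon (eq_sym i) (eq_sym j) mulrC mulrA.
under eq_bigr => i _ do under eq_bigr => j _ do rewrite termE.
under eq_bigr => i _ do
  rewrite (sum_ord_delta 7 b (fun j => beta i j * (a == i)%:R)) lt_b7.
by rewrite (sum_ord_delta 7 a (beta^~ b)) lt_a7.
Qed.

Lemma sum_ord_pad (f : nat -> R) n m :
  (forall j, (n <= j)%N -> f j = 0) -> (forall j, (m <= j)%N -> f j = 0) ->
  \sum_(j < n) f j = \sum_(j < m) f j.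
Proof.
wlog le_nm : n m / (n <= m)%N.
  move=> wlog_le fn fm; case: (leqP n m) => [le|/ltnW le]; first exact: wlog_le.
  by symmetry; exact: (wlog_le m n le fm fn).
move=> fn _; rewrite -!(big_mkord xpredT) (big_cat_nat (leq0n n) le_nm) /=.
rewrite [X in _ = _ + X]big1_seq ?addr0 // => j /andP[_].
by rewrite mem_index_iota => /andP[le_nj _]; apply: fn.
Qed.

Lemma LambdaE p : deg_le p 6 -> Lambda beta p = riesz p.
Proof.
move=> p6; rewrite /Lambda /riesz.
have rowE i : \sum_(j < size p`_i) coef2 p i j * beta i j =
              \sum_(j < 7) coef2 p i j * beta i j.
  apply: (sum_ord_pad (f := fun j => coef2 p i j * beta i j)) => j le_j.
    by rewrite /coef2 nth_default ?mul0r.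
  by rewrite p6 ?mul0r //; lia.
under eq_bigr => i _ do rewrite rowE.
apply: (sum_ord_pad (f := fun i => \sum_(j < 7) coef2 p i j * beta i j)) => i le_i.
  by rewrite big1 // => j _; rewrite /coef2 (nth_default _ le_i) coef0 mul0r.
by rewrite big1 // => j _; rewrite p6 ?mul0r //; lia.
Qed.

End Riesz.

Section MomentMatrix.
Variables (R : realType) (beta : nat -> nat -> R).
Implicit Types (p q : {poly {poly R}}) (x y : R).
Local Notation M := (M3 beta).
Local Notation monk := (monk R).

Lemma trmx_M3 : M^T = M.
Proof. by apply/matrixP => i j; rewrite !mxE addnC [((mono i).2 + _)%N]addnC. Qed.

Lemma polycolE p : polycol beta p = M *m coefv p.
Proof.
apply/matrixP => i j; rewrite !mxE summxE.
by apply: eq_bigr => k _; rewrite !mxE mulrC.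
Qed.

Lemma riesz_monkM r k : riesz beta (monk r * monk k) = M r k.
Proof.
have := mono_deg r; have := mono_deg k => dk dr.
by rewrite /monk monM riesz_mon ?mxE //; lia.
Qed.

Lemma polycol_riesz p r :
  deg_le p 3 -> polycol beta p r 0 = riesz beta (monk r * p).
Proof.
move=> p3; rewrite -[in RHS](coefvK p3) mulr_sumr raddf_sum polycolE mxE.
by apply: eq_bigr => k _ /=; rewrite mulrCA riesz_cstM riesz_monkM !mxE mulrC.
Qed.

Lemma M3_quad p :
  deg_le p 3 -> ((coefv p)^T *m M *m coefv p) 0 0 = riesz beta (p * p).
Proof.
move=> p3; rewrite -mulmxA -polycolE mxE.
rewrite -[X in riesz _ (X * _)](coefvK p3) mulr_suml raddf_sum.
by apply: eq_bigr => k _ /=; rewrite -mulrA riesz_cstM polycol_riesz // !mxE.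
Qed.

Definition kernel_poly (s : 'I_10) := polyv (row s (kermx M))^T.

Lemma polycol_kernel_poly s : polycol beta (kernel_poly s) = 0.
Proof.
rewrite polycolE polyvK -{1}trmx_M3 -trmx_mul -row_mul mulmx_ker.
by apply/matrixP => i j; rewrite !mxE.
Qed.

Lemma eval2_kernel_span p : deg_le p 3 -> polycol beta p = 0 ->
  exists u : 'rV[R]_10, forall x y,
    eval2 p x y = \sum_s u 0 s * eval2 (kernel_poly s) x y.
Proof.
move=> p3 p_ker; set K := kermx M.
have coef_ker : ((coefv p)^T <= K)%MS.
  by apply/sub_kermxP; rewrite -[M]trmx_M3 -trmx_mul -polycolE p_ker trmx0.
set u := (coefv p)^T *m pinvmx K.
have coefE k : coefv p k 0 = \sum_s u 0 s * K s k.
  have -> : coefv p k 0 = (coefv p)^T 0 k by rewrite !mxE.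
  by rewrite -(mulmxKpV coef_ker) mxE.
exists u => x y; rewrite -[in LHS](coefvK p3) eval2_polyv.
under eq_bigr => k _ do rewrite coefE mulr_suml.
rewrite exchange_big; apply: eq_bigr => s _.
rewrite eval2_polyv mulr_sumr; apply: eq_bigr => k _.
by rewrite -mulrA !mxE.
Qed.

End MomentMatrix.

Section Interpolation.
Variables (R : realType) (beta : nat -> nat -> R) (pts : 'I_8 -> R * R).
Implicit Types (p q : {poly {poly R}}) (c : 'cV[R]_8).
Local Notation mon := (mon R).
Local Notation W := (WB1 pts).

Definition polyB1 c :=
  \sum_(l < 8) cst (c l 0) * mon (mono (B1 l)).1 (mono (B1 l)).2.

Lemma reducedE c q i j : reduced c q i j = mon i j * (q - polyB1 c).
Proof. by []. Qed.

Lemma deg_le_polyB1 c : deg_le (polyB1 c) 3.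
Proof. by apply: deg_le_sum => l _; apply: deg_le_cstM; apply: deg_le_monk. Qed.

Lemma eval2_polyB1 c k : eval2 (polyB1 c) (pts k).1 (pts k).2 = (W *m c) k 0.
Proof.
rewrite eval2_sum mxE; apply: eq_bigr => l _.
by rewrite eval2M eval2_cst eval2_mon !mxE mulrC.
Qed.

Lemma polycol_polyB1 c : polycol beta (polyB1 c) = colsub B1 (M3 beta) *m c.
Proof.
apply/matrixP => r j; rewrite (ord1 j) polycol_riesz; last exact: deg_le_polyB1.
rewrite mulr_sumr raddf_sum mxE; apply: eq_bigr => l _ /=.
by rewrite mulrCA riesz_cstM riesz_monkM !mxE mulrC.
Qed.

Lemma deg_le_reduced c t i j : deg_le t 4 -> (i + j <= 2)%N ->
  deg_le (reduced c t i j) 6.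
Proof.
move=> t4 le_ij2; rewrite reducedE; apply: (deg_leW _ (deg_le_monM _)); last first.
  by apply: deg_leB t4 (deg_leW _ (deg_le_polyB1 c)).
lia.
Qed.

Lemma LambdaE_reduced c t i j : deg_le t 4 -> (i + j <= 2)%N ->
  Lambda beta (reduced c t i j) = riesz beta (reduced c t i j).
Proof. by move=> t4 le_ij2; apply/LambdaE/deg_le_reduced. Qed.

Definition vanish_at p := forall k, eval2 p (pts k).1 (pts k).2 = 0.

Hypothesis variety_pts : forall x y, variety beta x y -> exists k, pts k = (x, y).

Lemma vanish_at_variety p :
  vanish_at p -> forall x y, variety beta x y -> eval2 p x y = 0.
Proof. by move=> p0 x y /variety_pts [k pk]; have := p0 k; rewrite pk. Qed.

Lemma WB1_unit : weakly_consistent beta -> B1_basis (M3 beta) -> W \in unitmx.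
Proof.
move=> wc [B1_free _]; rewrite -unitmx_tr -row_free_unit.
apply: contraT => W_not_free.
have : kermx W^T != 0 by rewrite kermx_eq0.
case/eqP/row_matrixP/boolp.existsNP => s /eqP; rewrite row0 => v_neq0.
set v := row s (kermx W^T) in v_neq0.
have Wv : W *m v^T = 0.
  by rewrite -[W]trmxK -trmx_mul -row_mul mulmx_ker row0 trmx0.
have polyB1_ker : polycol beta (polyB1 v^T) = 0.
  apply: wc; first exact: deg_le_polyB1.
  by apply: vanish_at_variety => k; rewrite eval2_polyB1 Wv mxE.
have : v *m (colsub B1 (M3 beta))^T = 0.
  by rewrite -[v]trmxK -trmx_mul -polycol_polyB1 polyB1_ker trmx0.
by move/eqP; rewrite (mulmx_free_eq0 _ B1_free) (negbTE v_neq0).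
Qed.

Hypothesis W_unit : W \in unitmx.

Definition interp_coef p : 'cV[R]_8 :=
  invmx W *m \col_k eval2 p (pts k).1 (pts k).2.

Lemma vanish_at_interp p : vanish_at (p - polyB1 (interp_coef p)).
Proof.
by move=> k; rewrite eval2B eval2_polyB1 mulmxA mulmxV // mul1mx mxE subrr.
Qed.

Lemma vanish_at_reduced p i j : vanish_at (reduced (interp_coef p) p i j).
Proof. by move=> k; rewrite reducedE eval2M vanish_at_interp mulr0. Qed.

End Interpolation.

Section AtomicMeasure.
Context d (T : measurableType d) (R : realType) (n : nat).
Variables (a : 'I_n.+1 -> T) (r : 'I_n.+1 -> R) (r_ge0 : forall k, 0 <= r k).

Lemma max0_sub_maxN0 (x : R) : Num.max x 0 - Num.max (- x) 0 = x.
Proof.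
by rewrite -[in Num.max (- x) 0]oppr0 -oppr_min opprK addr_max_min addr0.
Qed.

Local Open Scope ereal_scope.

Definition atomic_measure : {measure set T -> \bar R} :=
  msum (fun k => mscale (NngNum (r_ge0 (inord k))) \d_(a (inord k))) n.+1.

Lemma ge0_integral_atomic (h : T -> \bar R) : measurable_fun setT h ->
  (forall z, 0 <= h z) -> \int[atomic_measure]_z h z = \sum_k (r k)%:E * h (a k).
Proof.
move=> mh h0; rewrite ge0_integral_measure_sum //; apply: eq_bigr => k _.
by rewrite ge0_integral_mscale //= integral_dirac // diracE in_setT mul1e inord_val.
Qed.

Lemma integral_atomic (g : T -> R) : measurable_fun setT g ->
  atomic_measure.-integrable setT (fun z => (g z)%:E) /\
  \int[atomic_measure]_z (g z)%:E = (\sum_k r k * g (a k))%:E.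
Proof.
move=> mg; have mgE : measurable_fun setT (fun z => (g z)%:E).
  exact/measurable_EFinP.
split.
  apply/integrableP; split => //; rewrite ge0_integral_atomic //; last first.
    exact: measurableT_comp.
  by under eq_bigr do rewrite abse_EFin -EFinM; rewrite sumEFin ltry.
rewrite integralE !ge0_integral_atomic //; last 2 first.
- exact: measurable_funeneg.
- exact: measurable_funepos.
under eq_bigr do rewrite funeposE -EFin_max -EFinM.
under [X in _ - X]eq_bigr do rewrite funenegE -EFin_max -EFinM.
rewrite !sumEFin -EFinB -sumrB; congr EFin; apply: eq_bigr => k _.
by rewrite -mulrBr max0_sub_maxN0.
Qed.

End AtomicMeasure.

Section Sufficiency.
Variables (R : realType) (beta : nat -> nat -> R) (pts : 'I_8 -> R * R).
Implicit Types (p t : {poly {poly R}}).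
Local Notation mon := (mon R).
Local Notation W := (WB1 pts).
Local Notation interp_coef := (interp_coef pts).

Hypothesis variety_pts : forall x y, variety beta x y -> exists k, pts k = (x, y).
Hypothesis wc : weakly_consistent beta.
Hypothesis W_unit : W \in unitmx.

Definition weights : 'cV[R]_8 :=
  invmx W^T *m \col_l beta (mono (B1 l)).1 (mono (B1 l)).2.

Definition defect p : R :=
  riesz beta p - \sum_k weights k 0 * eval2 p (pts k).1 (pts k).2.

Fact defect_is_zmod_morphism : zmod_morphism defect.
Proof.
move=> p q; rewrite /defect raddfB /=.
have -> : \sum_k weights k 0 * eval2 (p - q) (pts k).1 (pts k).2 =
    \sum_k weights k 0 * eval2 p (pts k).1 (pts k).2 -
    \sum_k weights k 0 * eval2 q (pts k).1 (pts k).2.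
  by rewrite -sumrB; apply: eq_bigr => k _; rewrite eval2B mulrBr.
by ring.
Qed.

HB.instance Definition _ :=
  GRing.isZmodMorphism.Build _ _ defect defect_is_zmod_morphism.

Lemma defect_cstM c p : defect (cst c * p) = c * defect p.
Proof.
rewrite /defect riesz_cstM mulrBr; congr (_ - _); rewrite mulr_sumr.
by apply: eq_bigr => k _; rewrite eval2M eval2_cst mulrCA.
Qed.

Lemma defect_vanish p : vanish_at pts p -> defect p = riesz beta p.
Proof. by move=> p0; rewrite /defect big1 ?subr0 // => k _; rewrite p0 mulr0. Qed.

Lemma defect_B1 l : defect (mon (mono (B1 l)).1 (mono (B1 l)).2) = 0.
Proof.
have := mono_deg (B1 l) => deg_l.
rewrite /defect riesz_mon; [|lia|lia].
have -> : \sum_k weights k 0 * eval2 (mon (mono (B1 l)).1 (mono (B1 l)).2)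
    (pts k).1 (pts k).2 = (W^T *m weights) l 0.
  by rewrite mxE; apply: eq_bigr => k _; rewrite !mxE eval2_mon mulrC.
by rewrite /weights mulmxA mulmxV ?unitmx_tr // mul1mx mxE subrr.
Qed.

Lemma defect_monM u v t :
  defect (reduced (interp_coef t) t u v) = 0 ->
  (forall l, defect (mon (u + (mono (B1 l)).1) (v + (mono (B1 l)).2)) = 0) ->
  defect (mon u v * t) = 0.
Proof.
move=> red0 B1_0.
have -> : mon u v * t = reduced (interp_coef t) t u v + \sum_l
    cst (interp_coef t l 0) * mon (u + (mono (B1 l)).1) (v + (mono (B1 l)).2).
  rewrite reducedE mulrBr mulr_sumr (eq_bigr _ (fun l _ => mulrCA _ _ _)).
  by under eq_bigr do rewrite monM; rewrite subrK.
rewrite raddfD /= red0 add0r raddf_sum big1 // => l _ /=.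
by rewrite defect_cstM B1_0 mulr0.
Qed.

Lemma defect_reduced_cubic u v t : deg_le t 3 -> (u + v <= 3)%N ->
  defect (reduced (interp_coef t) t u v) = 0.
Proof.
move=> t3 le_uv3; have [r ruv] := mono_surj le_uv3.
have deg_red : deg_le (t - polyB1 (interp_coef t)) 3.
  by apply: deg_leB => //; exact: deg_le_polyB1.
have red_ker : polycol beta (t - polyB1 (interp_coef t)) = 0.
  by apply: wc => //; exact/vanish_at_variety/vanish_at_interp.
rewrite defect_vanish; last exact: vanish_at_reduced.
rewrite reducedE; have -> : mon u v = monk R r by rewrite /monk ruv.
by rewrite -polycol_riesz // red_ker mxE.
Qed.

Hypothesis Lambda_reduced0 : forall i j, (i + j <= 2)%N ->
  Lambda beta (reduced (interp_coef (mon 4 0)) (mon 4 0) i j) = 0 /\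
  Lambda beta (reduced (interp_coef (mon 3 1)) (mon 3 1) i j) = 0.

(* Exponents of the monomials outside B1 whose relations generate all moments:
   x y^2 and y^3 are reduced through weak consistency, x^4 and x^3 y through
   [Lambda_reduced0]. *)
Definition relation_exps := [:: (1, 2); (0, 3); (4, 0); (3, 1)]%N.

Lemma defect_reduced ab u v : ab \in relation_exps ->
  (u + v + ab.1 + ab.2 <= 6)%N ->
  defect (reduced (interp_coef (mon ab.1 ab.2)) (mon ab.1 ab.2) u v) = 0.
Proof.
rewrite !inE => /or4P[] /eqP-> /= le_uv6.
- by apply: defect_reduced_cubic; [exact: deg_le_mon | lia].
- by apply: defect_reduced_cubic; [exact: deg_le_mon | lia].
- have le_uv2 : (u + v <= 2)%N by lia.
  rewrite defect_vanish; last exact: vanish_at_reduced.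
  by rewrite -LambdaE_reduced ?(Lambda_reduced0 le_uv2).1 //; exact: deg_le_mon.
- have le_uv2 : (u + v <= 2)%N by lia.
  rewrite defect_vanish; last exact: vanish_at_reduced.
  by rewrite -LambdaE_reduced ?(Lambda_reduced0 le_uv2).2 //; exact: deg_le_mon.
Qed.

Lemma mono_B1P ij : ij \in take 8 monos -> exists l, mono (B1 l) = ij.
Proof.
move=> ij_B1; have lt_idx : (index ij (take 8 monos) < 8)%N.
  by rewrite -[8%N]/(size (take 8 monos)) index_mem.
by exists (Ordinal lt_idx); rewrite /mono /= -(nth_take _ lt_idx) nth_index.
Qed.

Lemma monomial_split i j : (i + j <= 6)%N ->
  (exists l, mono (B1 l) = (i, j)) \/
  exists2 ab, ab \in relation_exps &
    exists u v, [/\ (u + v + ab.1 + ab.2 <= 6)%N, i = u + ab.1 & j = v + ab.2]%N.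
Proof.
move=> le_ij6; have [le2j|lt_j2] := leqP 2 j.
  case: i le_ij6 => [|i] le_ij6.
    case: j le2j le_ij6 => [|[|[|j]]] // _ le_j6; first by left; apply: mono_B1P.
    by right; exists (0, 3)%N => //; exists 0%N, j; split => /=; lia.
  by right; exists (1, 2)%N => //; exists i, (j - 2)%N; split => /=; lia.
have [le4ij|lt_ij4] := leqP 4 (i + j).
  right; case: j lt_j2 le4ij le_ij6 => [|[|//]] _ le4 le6.
  - by exists (4, 0)%N => //; exists (i - 4)%N, 0%N; split => /=; lia.
  - by exists (3, 1)%N => //; exists (i - 3)%N, 0%N; split => /=; lia.
left; apply: mono_B1P.
by case: j lt_j2 lt_ij4 le_ij6 => [|[|//]] _; case: i => [|[|[|[|i]]]].
Qed.

Lemma B1_grade_le l :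
  (7 * ((mono (B1 l)).1 + (mono (B1 l)).2) + (mono (B1 l)).2 <= 22)%N.
Proof. by case: l => [[|[|[|[|[|[|[|[|//]]]]]]]] ?]. Qed.

Lemma relation_grade_ge ab :
  ab \in relation_exps -> (23 <= 7 * (ab.1 + ab.2) + ab.2)%N.
Proof. by rewrite !inE => /or4P[] /eqP->. Qed.

(* Induction on the grade 7 (i + j) + j: a relation expresses x^i y^j through
   monomials of lower degree, or of equal degree and lower degree in y. *)
Lemma defect_mon i j : (i + j <= 6)%N -> defect (mon i j) = 0.
Proof.
have [n] := ubnP (7 * (i + j) + j).
elim: n i j => [|n IH] i j; first by rewrite ltn0.
move=> lt_n le_ij6; case: (monomial_split le_ij6) => [[l lij]|].
  by rewrite -[i]/((i, j).1) -[j]/((i, j).2) -lij defect_B1.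
case=> ab rel [u [v [le_uv6 iE jE]]].
rewrite iE jE -monM; apply: defect_monM; first exact: defect_reduced.
move=> l; have := B1_grade_le l; have := relation_grade_ge rel => grade_ab grade_l.
by apply: IH; lia.
Qed.

Lemma defect_eq0 p : deg_le p 6 -> defect p = 0.
Proof.
move=> p6; rewrite (deg_le6E p6) raddf_sum big1 // => i _ /=.
rewrite raddf_sum big1 // => j le_ij6 /=.
by rewrite defect_cstM defect_mon ?mulr0.
Qed.

Lemma weights_ge0 : psd_mx (M3 beta) -> forall k, 0 <= weights k 0.
Proof.
move=> psd k; set q := polyB1 (col k (invmx W)).
have q3 : deg_le q 3 := deg_le_polyB1 _.
have q_delta k' : eval2 q (pts k').1 (pts k').2 = (k' == k)%:R.
  by rewrite eval2_polyB1 colE mulmxA mulmxV // mul1mx mxE eqxx andbT.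
have -> : weights k 0 =
    \sum_k' weights k' 0 * eval2 (q * q) (pts k').1 (pts k').2.
  rewrite (bigD1 k) //= big1 ?addr0 => [|k' nk']; last first.
    by rewrite eval2M q_delta (negbTE nk') mul0r mulr0.
  by rewrite eval2M q_delta eqxx !mulr1n !mulr1.
have := defect_eq0 (deg_le_mul33 q3 q3).
by rewrite /defect => /eqP; rewrite subr_eq0 => /eqP <-; rewrite -M3_quad.
Qed.

Lemma moments_weights i j : (i + j <= 6)%N ->
  beta i j = \sum_k weights k 0 * ((pts k).1 ^+ i * (pts k).2 ^+ j).
Proof.
move=> le_ij6; have := defect_mon le_ij6.
rewrite /defect riesz_mon; [|lia|lia].
by move/eqP; rewrite subr_eq0 => /eqP ->; under eq_bigr do rewrite eval2_mon.
Qed.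

Lemma representing_atomic_weights (M_psd : psd_mx (M3 beta)) :
  representing (atomic_measure pts (weights_ge0 M_psd)) beta.
Proof.
move=> i j le_ij6.
have mon_mfun : measurable_fun setT (fun z : R * R => z.1 ^+ i * z.2 ^+ j).
  by apply: measurable_funM; apply: measurable_funX;
    [exact: measurable_fst | exact: measurable_snd].
have [mon_int mon_integral] := integral_atomic pts (weights_ge0 M_psd) mon_mfun.
by rewrite mon_integral -moments_weights.
Qed.

End Sufficiency.

Section RepresentingMeasure.
Variables (R : realType) (beta : nat -> nat -> R).
Variable mu : {measure set (R * R)%type -> \bar R}.
Hypothesis mu_beta : representing mu beta.
Local Open Scope ereal_scope.

Lemma integral_poly p : deg_le p 6 ->
  mu.-integrable setT (fun z => (eval2 p z.1 z.2)%:E) /\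
  \int[mu]_z (eval2 p z.1 z.2)%:E = (riesz beta p)%:E.
Proof.
move=> p6.
pose term i j z :=
  ((if (i + j <= 6)%N then coef2 p i j * (z.1 ^+ i * z.2 ^+ j) else 0)%R)%:E.
have term_int i j : mu.-integrable setT (term i j).
  rewrite /term; case: leqP => [le_ij6|_]; last exact: integrable0.
  apply: (eq_integrable measurableT _ _ _
    (integrableZl measurableT (coef2 p i j) (mu_beta le_ij6).1)).
  by move=> z _; rewrite EFinM.
have term_integral i j : \int[mu]_z term i j z =
    ((if (i + j <= 6)%N then coef2 p i j * beta i j else 0)%R)%:E.
  rewrite /term; case: leqP => [le_ij6|_]; last by rewrite integral0_eq.
  rewrite EFinM -(mu_beta le_ij6).2 -(integralZl measurableT (mu_beta le_ij6).1).
  by apply: eq_integral => z _; rewrite EFinM.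
have evalE : (fun z => (eval2 p z.1 z.2)%:E) =
    fun z => \sum_(i < 7) \sum_(j < 7) term i j z.
  apply/funext => z; rewrite [in LHS](deg_le6E p6) eval2_sum -sumEFin.
  apply: eq_bigr => i _; rewrite eval2_sum big_mkcond -sumEFin.
  apply: eq_bigr => j _.
  by rewrite /term; case: ifP => //= _; rewrite eval2M eval2_cst eval2_mon.
have rieszE : (riesz beta p = \sum_(i < 7) \sum_(j < 7)
    if (i + j <= 6)%N then coef2 p i j * beta i j else 0)%R.
  apply: eq_bigr => i _; apply: eq_bigr => j _.
  by case: leqP => // lt6; rewrite p6 ?mul0r.
rewrite evalE; split.
  by apply: integrable_sum => // i _; apply: integrable_sum.
rewrite integral_sum //; last by move=> i; apply: integrable_sum.
rewrite rieszE -sumEFin; apply: eq_bigr => i _.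
by rewrite integral_sum // -sumEFin; apply: eq_bigr => j _.
Qed.

Lemma ae_kernel_poly s :
  \forall z \ae mu, eval2 (kernel_poly beta s) z.1 z.2 = 0%R.
Proof.
set K := kernel_poly beta s; have K3 : deg_le K 3 := deg_le_polyv _.
have [sq_int sq_integral] := integral_poly (deg_le_mul33 K3 K3).
have sq_norm z : `|(eval2 (K * K) z.1 z.2)%:E| = (eval2 (K * K) z.1 z.2)%:E.
  by rewrite abse_EFin ger0_norm // eval2M -expr2 sqr_ge0.
have : \int[mu]_z `|(eval2 (K * K) z.1 z.2)%:E| = 0.
  under eq_integral => z _ do rewrite sq_norm.
  rewrite sq_integral -M3_quad //.
  by rewrite -mulmxA -polycolE polycol_kernel_poly mulmx0 mxE.
move/(ae_eq_integral_abs mu measurableT (measurable_int mu sq_int)).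
apply: filterS => z /(_ Logic.I) /= [].
by rewrite eval2M => /eqP; rewrite mulf_eq0 orbb => /eqP.
Qed.

(* The variety is cut out by the finitely many kernel polynomials. *)
Lemma ae_variety : \forall z \ae mu, variety beta z.1 z.2.
Proof.
have := @filter_forall _ 'I_10
  (fun s z => eval2 (kernel_poly beta s) z.1 z.2 = 0%R)
  _ (ae_filter_ringOfSetsType mu) ae_kernel_poly.
apply: filterS => z K0 p p3 p_ker; have [u ->] := eval2_kernel_span p3 p_ker.
by rewrite big1 // => s _; rewrite K0 mulr0.
Qed.

Lemma riesz_eq0_variety q : deg_le q 6 ->
  (forall x y, variety beta x y -> eval2 q x y = 0%R) -> riesz beta q = 0%R.
Proof.
move=> q6 q0; have [q_int q_integral] := integral_poly q6.
apply: EFin_inj; rewrite -q_integral (ae_eq_integral (fun=> 0)) ?integral0_eq //.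
  exact: measurable_int q_int.
by apply: filterS ae_variety => z zV _; rewrite q0.
Qed.

Lemma representing_weakly_consistent : weakly_consistent beta.
Proof.
move=> p p3 p0; apply/matrixP => r j; rewrite (ord1 j) polycol_riesz // mxE.
apply: riesz_eq0_variety => [|x y xyV].
  exact: deg_le_mul33 (deg_le_monk _ r) p3.
by rewrite eval2M p0 ?mulr0.
Qed.

Lemma representing_Lambda_reduced (pts : 'I_8 -> R * R) :
  (forall x y, variety beta x y -> exists k, pts k = (x, y)) ->
  WB1 pts \in unitmx -> forall t i j, deg_le t 4 -> (i + j <= 2)%N ->
  Lambda beta (reduced (interp_coef pts t) t i j) = 0%R.
Proof.
move=> V_pts W_unit t i j t4 le_ij2; rewrite LambdaE_reduced //.
apply: riesz_eq0_variety (deg_le_reduced _ t4 le_ij2) _.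
exact/(vanish_at_variety V_pts)/vanish_at_reduced.
Qed.

End RepresentingMeasure.

Theorem theorem5p1 (R : realType) (beta : nat -> nat -> R)
  (pts : 'I_8 -> R * R) :
  psd_mx (M3 beta) ->
  pd_mx (M2 beta) ->
  \rank (M3 beta) = 8%N ->
  injective pts ->
  (forall x y : R, variety beta x y <-> exists k, pts k = (x, y)) ->
  B1_basis (M3 beta) ->
  let a := invmx (WB1 pts) *m \col_k ((pts k).1 ^+ 4) in
  let b := invmx (WB1 pts) *m \col_k ((pts k).1 ^+ 3 * (pts k).2) in
  (exists mu : {measure set (R * R)%type -> \bar R}, representing mu beta) <->
  (weakly_consistent beta /\
   (forall i j : nat, (i + j <= 2)%N ->
      Lambda beta (reduced a (mon R 4 0) i j) = 0 /\
      Lambda beta (reduced b (mon R 3 1) i j) = 0)).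
Proof.
move=> M_psd _ _ _ variety_pts B1_basis_M a b.
have V_pts x y : variety beta x y -> exists k, pts k = (x, y) by move/variety_pts.
have aE : a = interp_coef pts (mon R 4 0).
  by congr (_ *m _); apply/matrixP => k j; rewrite !mxE eval2_mon mulr1.
have bE : b = interp_coef pts (mon R 3 1).
  by congr (_ *m _); apply/matrixP => k j; rewrite !mxE eval2_mon.
rewrite aE bE; split => [[mu mu_beta]|[wc Lambda_reduced0]].
  have wc := representing_weakly_consistent mu_beta.
  have W_unit := WB1_unit V_pts wc B1_basis_M.
  have Lambda_reduced := representing_Lambda_reduced mu_beta V_pts W_unit.
  by split=> // i j le_ij2; split; apply: Lambda_reduced => //; exact: deg_le_mon.
have W_unit := WB1_unit V_pts wc B1_basis_M.
eexists; exact: representing_atomic_weights V_pts wc W_unit Lambda_reduced0 M_psd.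
Qed.
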